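(* Every deterministic mechanism for locating one facility on $[0,1]$ that is anonymous, Pareto efficient and strategy proof has approximation ratio at least $\frac{6}{5}$ for the complemented Gini index of utilities.
   Context: Agents $1,\dots,n$ report locations $x_1,\dots,x_n\in[0,1]$; a deterministic mechanism $f$ maps each profile (for each $n$) to a facility location $y=f(x_1,\dots,x_n)\in[0,1]$. Agent $i$'s distance is $d_i=|x_i-y|$, utility $u_i=1-d_i$. The Gini index of utilities is $G_u=\frac{\sum_i\sum_j|u_i-u_j|}{2n\sum_i u_i}$ and the complemented Gini index is $1-G_u$. $f$ is anonymous if permuting the reports does not change the output; Pareto efficient if for no profile is there a location $z$ with $|x_j-z|\le|x_j-f(x)|$ for all $j$ and strict inequality for some $i$; strategy proof if no agent $i$ can report some $x_i'$ and obtain $|x_i-f(x_1,\dots,x_i',\dots,x_n)|<|x_i-f(x)|$. The approximation ratio of $f$ is the supremum over all profiles $x$ of $\mathrm{OPT}(x)/(1-G_u(f(x)))$, where $\mathrm{OPT}(x)$ is the maximum of $1-G_u$ over all facility locations in $[0,1]$. *)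

From HB Require Import structures.
From mathcomp Require Import all_boot all_order all_algebra all_fingroup.
From mathcomp Require Import all_classical all_reals all_analysis.
Set Implicit Arguments. Unset Strict Implicit. Unset Printing Implicit Defensive.
Import Order.TTheory GRing.Theory Num.Theory.
Local Open Scope classical_set_scope.
Local Open Scope ring_scope.

Section Defs.
Variable R : realType.

Definition mechanism := forall n : nat, ('I_n -> R) -> R.

Definition in01 (a : R) : Prop := 0 <= a <= 1.
Definition profile01 n (x : 'I_n -> R) : Prop := forall i, in01 (x i).

Definition util n (x : 'I_n -> R) (y : R) (i : 'I_n) : R := 1 - `|x i - y|.

Definition gini n (x : 'I_n -> R) (y : R) : R :=
  (\sum_(i < n) \sum_(j < n) `|util x y i - util x y j|) /
  (2 * n%:R * \sum_(i < n) util x y i).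

Definition cgini n (x : 'I_n -> R) (y : R) : R := 1 - gini x y.

Definition OPT n (x : 'I_n -> R) : R := sup [set cgini x y | y in in01].

Definition mech_outputs01 (f : mechanism) : Prop :=
  forall n (x : 'I_n -> R), profile01 x -> in01 (f n x).

Definition anonymous (f : mechanism) : Prop :=
  forall n (x : 'I_n -> R) (s : 'S_n), profile01 x ->
    f n (fun i => x (s i)) = f n x.

Definition pareto_efficient (f : mechanism) : Prop :=
  forall n (x : 'I_n -> R), profile01 x ->
    ~ exists z : R, in01 z /\
        (forall j, `|x j - z| <= `|x j - f n x|) /\
        (exists i, `|x i - z| < `|x i - f n x|).

Definition strategy_proof (f : mechanism) : Prop :=
  forall n (x : 'I_n -> R) (i : 'I_n) (xi' : R), profile01 x -> in01 xi' ->
    ~ (`|x i - f n (fun j => if j == i then xi' else x j)| < `|x i - f n x|).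

(* approximation ratio: sup over all profiles (n >= 1) of OPT(x) / (1 - G_u(f(x))),
   taken in the extended reals so that an unbounded ratio is +oo *)
Definition approx_ratio (f : mechanism) : \bar R :=
  ereal_sup [set r : \bar R | exists (n : nat) (x : 'I_n -> R),
     [/\ (0 < n)%N, profile01 x & r = (OPT x / cgini x (f n x))%:E]].
End Defs.

From HB Require Import structures.
From mathcomp Require Import all_boot all_order all_algebra all_fingroup.
From mathcomp Require Import all_classical all_reals all_analysis.
From mathcomp Require Import ring lra.
Import Order.TTheory GRing.Theory Num.Theory.
Local Open Scope ring_scope.

(* Let y0 be the outcome on the two-agent
   profile (0, 1), say y0 <= 1/2.  On the profile (y0, 1) the first agent could
   report 0 and get the facility exactly at y0, so strategy proofness puts the
   facility at y0 there too.  The utilities are then 1 and y0, whose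
   complemented Gini index (1 + 3 y0) / (2 (1 + y0)) is at most 5/6, while the
   midpoint of the two agents achieves 1.  The case y0 >= 1/2 is symmetric,
   using the profile (0, y0). *)

Section TwoAgents.
Context {R : realType}.

Definition profile2 (a b : R) : 'I_2 -> R := fun i => if i == ord0 then a else b.

Lemma profile01_profile2 {a b : R} : in01 a -> in01 b -> profile01 (profile2 a b).
Proof. by move=> ha hb i; rewrite /profile2; case: (i == ord0). Qed.

Lemma profile2_set0 (a b z : R) :
  (fun j => if j == ord0 then z else profile2 a b j) = profile2 z b.
Proof. by apply/funext => j; rewrite /profile2; case: (j == ord0). Qed.

Lemma profile2_set1 (a b z : R) :
  (fun j => if j == ord_max then z else profile2 a b j) = profile2 a z.
Proof. by apply/funext => -[[|[|]]]. Qed.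

Lemma utility_ge0 (a y : R) : in01 a -> in01 y -> 0 <= 1 - `|a - y|.
Proof.
rewrite /in01 => /andP[? ?] /andP[? ?]; rewrite subr_ge0 ler_norml.
by apply/andP; split; lra.
Qed.

Lemma cgini_profile2 (a b y : R) :
  cgini (profile2 a b) y =
  1 - `|(1 - `|a - y|) - (1 - `|b - y|)| / (2 * ((1 - `|a - y|) + (1 - `|b - y|))).
Proof.
rewrite /cgini /gini /util /profile2 !big_ord_recr !big_ord0 /= !add0r.
congr (1 - _).
set ua := 1 - `|a - y|; set ub := 1 - `|b - y|.
rewrite !subrr normr0 addr0 add0r distrC -mulr2n -[_ *+ 2]mulr_natl.
by rewrite -[2 * 2 * _]mulrA -mulf_div divff ?mul1r // pnatr_eq0.
Qed.

Lemma cgini_profile2C (a b y : R) :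
  cgini (profile2 a b) y = cgini (profile2 b a) y.
Proof. by rewrite !cgini_profile2 distrC [_ + (1 - _)]addrC. Qed.

Lemma OPT_profile2_ge1 (a b : R) : in01 a -> in01 b -> 1 <= OPT (profile2 a b).
Proof.
move=> ha hb.
have hub : has_ubound [set cgini (profile2 a b) y | y in @in01 R].
  exists 1 => _ [y hy <-]; rewrite cgini_profile2 lerBlDr lerDl.
  by rewrite divr_ge0 // mulr_ge0 // addr_ge0 // utility_ge0.
have mid01 : in01 ((a + b) / 2).
  by move: ha hb; rewrite /in01 => /andP[? ?] /andP[? ?]; apply/andP; split; lra.
apply: le_trans (ub_le_sup hub (ex_intro2 _ _ _ mid01 erefl)).
have mid_equidistant : `|a - (a + b) / 2| = `|b - (a + b) / 2|.
  by rewrite -normrN; congr `|_|; field.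
by rewrite cgini_profile2 mid_equidistant subrr normr0 mul0r subr0.
Qed.

(* The utilities are 1 and 1 - d, giving 1 - d / (2 (2 - d)): this is 5/6 at
   d = 1/2 and decreases in d. *)
Lemma cgini_profile2_at_agent (a b : R) :
  in01 a -> in01 b -> 1 / 2 <= `|b - a| ->
  0 < cgini (profile2 a b) a <= 5 / 6.
Proof.
move=> ha hb far; rewrite cgini_profile2 subrr normr0 subr0.
have d_le1 : `|b - a| <= 1.
  by move: ha hb; rewrite /in01 ler_norml => /andP[? ?] /andP[? ?]; apply/andP; split; lra.
have d_ge0 := normr_ge0 (b - a).
rewrite (_ : 1 - (1 - `|b - a|) = `|b - a|); last by ring.
rewrite ger0_norm // (_ : 2 * (1 + (1 - `|b - a|)) = 2 * (2 - `|b - a|)); last by ring.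
have pos : 0 < 2 * (2 - `|b - a|) by lra.
by rewrite subr_gt0 lerBlDr -lerBlDl ltr_pdivrMr // ler_pdivlMr //; apply/andP; split; lra.
Qed.

End TwoAgents.

Lemma strategy_proof_outcome_at_agent {R : realType} (f : mechanism R) {n : nat}
    {x : 'I_n -> R} (i : 'I_n) {z : R} :
  strategy_proof f -> profile01 x -> in01 z ->
  f n (fun j => if j == i then z else x j) = x i -> f n x = x i.
Proof.
move=> sp hx hz dev; have := sp n x i z hx hz.
rewrite dev subrr normr0 normr_gt0 subr_eq0 => /negP; rewrite negbK.
by move=> /eqP.
Qed.

Lemma approx_ratio_ge {R : realType} (f : mechanism R) n (x : 'I_n -> R) :
  (0 < n)%N -> profile01 x -> ((OPT x / cgini x (f n x))%:E <= approx_ratio f)%E.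
Proof. by move=> n0 hx; apply: ereal_sup_ubound; exists n, x. Qed.

Lemma ratio_ge_6_5 {R : realType} (O c : R) : 1 <= O -> 0 < c <= 5 / 6 -> 6 / 5 <= O / c.
Proof. by move=> O1 /andP[c0 c56]; rewrite ler_pdivlMr //; lra. Qed.

Theorem theorem5 (R : realType) (f : mechanism R) :
  mech_outputs01 f -> anonymous f -> pareto_efficient f -> strategy_proof f ->
  ((6 / 5 : R)%:E <= approx_ratio f)%E.
Proof.
move=> out _ _ sp.
have h0 : in01 (0 : R) by rewrite /in01 lexx ler01.
have h1 : in01 (1 : R) by rewrite /in01 ler01 lexx.
set y0 := f 2%N (profile2 0 1).
have hy0 : in01 y0 by apply/out/profile01_profile2.
suff [a [b [ha hb /andP[c0 c56]]]] : exists a b, [/\ in01 a, in01 b &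
    0 < cgini (profile2 a b) (f 2%N (profile2 a b)) <= 5 / 6].
  apply: le_trans _ (approx_ratio_ge f 2%N (profile2 a b) isT (profile01_profile2 ha hb)).
  by rewrite lee_fin ratio_ge_6_5 ?c0 ?OPT_profile2_ge1.
move: (hy0) => /andP[y0_ge0 y0_le1].
have [y0_left | y0_right] := lerP y0 (1 / 2).
- exists y0, 1; split=> //.
  have -> : f 2%N (profile2 y0 1) = y0.
    apply: (strategy_proof_outcome_at_agent f ord0 sp (profile01_profile2 hy0 h1) h0).
    by rewrite profile2_set0.
  by apply: cgini_profile2_at_agent => //; rewrite ger0_norm; lra.
- exists 0, y0; split=> //.
  have -> : f 2%N (profile2 0 y0) = y0.
    apply: (strategy_proof_outcome_at_agent f ord_max sp (profile01_profile2 h0 hy0) h1).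
    by rewrite profile2_set1.
  rewrite cgini_profile2C.
  by apply: cgini_profile2_at_agent => //; rewrite distrC subr0 ger0_norm; lra.
Qed.
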